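(* Every planar $3$-tree has track number at most $4000$.
   Context: A planar $3$-tree is a triangulated plane graph $G$ with $n\ge 3$ vertices such that either $n=3$ and $G$ is a $3$-cycle, or $n>3$ and $G$ has a vertex whose deletion yields a planar $3$-tree with $n-1$ vertices. A $t$-track assignment of a graph $G=(V,E)$ is a partition of $V$ into $t$ sets $V_1,\dots,V_t$, each an independent set of $G$, together with a total order $<_i$ on each $V_i$ (each $(V_i,<_i)$ is called a track). An X-crossing consists of two edges $(u,v)$ and $(x,y)$ with $u,x\in V_i$, $v,y\in V_j$ for some $i\neq j$, $u<_i x$ and $y<_j v$. A track layout is a track assignment with no X-crossing, and the track number of $G$ is the minimum $t$ such that $G$ has a $t$-track layout. *)

From mathcomp Require Import all_boot.
Set Implicit Arguments. Unset Strict Implicit. Unset Printing Implicit Defensive.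

(* A planar 3-tree is represented together with
   its face structure F (a list of triangular faces, with multiplicity):
   a plane 3-cycle has two faces (inner and outer), and the recursive
   deletion of a degree-3 vertex from a triangulation corresponds to
   inserting a vertex into a face and joining it to the three face
   vertices (stacking). *)

Definition tri_edge (a b c : nat) (u w : nat) : bool :=
  [|| (u == a) && (w == b), (u == b) && (w == a),
      (u == b) && (w == c), (u == c) && (w == b),
      (u == a) && (w == c) | (u == c) && (w == a)].

Definition add_vertex (E : nat -> nat -> bool) (v x y z : nat) (u w : nat) : bool :=
  [|| E u w, (u == v) && (w \in [:: x; y; z]) | (w == v) && (u \in [:: x; y; z])].

Inductive planar3tree : seq nat -> (nat -> nat -> bool) -> seq (nat * nat * nat) -> Prop :=
| P3T_base (a b c : nat) :
    a != b -> b != c -> a != c ->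
    planar3tree [:: a; b; c] (tri_edge a b c) [:: (a, b, c); (a, b, c)]
| P3T_step (V : seq nat) (E : nat -> nat -> bool) (F : seq (nat * nat * nat))
           (x y z v : nat) :
    planar3tree V E F -> (x, y, z) \in F -> v \notin V ->
    planar3tree (v :: V) (add_vertex E v x y z)
                ((x, y, v) :: (y, z, v) :: (x, z, v) :: rem (x, y, z) F).

Definition is_planar_3_tree (V : seq nat) (E : nat -> nat -> bool) : Prop :=
  exists F, planar3tree V E F.

Definition track_layout (V : seq nat) (E : nat -> nat -> bool) (t : nat)
  (track pos : nat -> nat) : Prop :=
  [/\ forall u, u \in V -> track u < t,
      forall u w, u \in V -> w \in V -> track u = track w -> pos u = pos w -> u = w,
      forall u w, u \in V -> w \in V -> E u w -> track u <> track w &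
      forall u v x y, u \in V -> v \in V -> x \in V -> y \in V ->
        E u v -> E x y -> track u = track x -> track v = track y ->
        track u <> track v -> ~ (pos u < pos x /\ pos y < pos v)].

Definition has_track_layout (V : seq nat) (E : nat -> nat -> bool) (t : nat) : Prop :=
  exists track pos, track_layout V E t track pos.

From mathcomp Require Import all_boot zify.
Set Implicit Arguments. Unset Strict Implicit. Unset Printing Implicit Defensive.

(* A planar 3-tree is layered along its stacking order: a stacked vertex lies
   one level above the lowest vertex of its face.  Edges then join equal or
   consecutive levels, and an edge climbing a level ends at the parent of its
   upper end or in the parent's shadow, a clique on the parent's level.  For
   such a layering a t-track layout of the edges inside levels lifts to a
   3t^2-track layout of the whole graph: v goes on the track (track of its
   parent, its own track, level mod 3), ordered by level and then
   lexicographically along the chain of ancestors.  The same structure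
   reappears inside each level, and one level further down every edge joins a
   vertex to its predecessor on a path, so 3, 27 and 3 * 27 * 27 <= 4000
   tracks suffice. *)

Fixpoint lexlt (s t : seq nat) : bool :=
  match s, t with
  | x :: s', y :: t' => (x < y) || ((x == y) && lexlt s' t')
  | _, _ => false
  end.

Lemma lexlt_irr s : lexlt s s = false.
Proof. by elim: s => //= x s ->; rewrite ltnn eqxx. Qed.

Lemma lexlt_trans s t u : lexlt s t -> lexlt t u -> lexlt s u.
Proof.
elim: s t u => [|x s IH] [|y t] [|z u] //=.
case/orP=> [lxy|/andP[/eqP<- st]]; case/orP=> [lyz|/andP[/eqP<- tu]].
- by rewrite (ltn_trans lxy lyz).
- by rewrite lxy.
- by rewrite lyz.
- by rewrite eqxx (IH _ _ st tu) orbT.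
Qed.

Lemma lexlt_total s t : size s = size t -> s != t -> lexlt s t || lexlt t s.
Proof.
elim: s t => [|x s IH] [|y t] //= [] Hs Hn.
case: (ltngtP x y) => //= Hxy; subst; rewrite ?orbT //.
by apply: IH => //; apply: contraNneq Hn => ->.
Qed.

Lemma lexlt_cat p p' s s' : size p = size p' ->
  lexlt (p ++ s) (p' ++ s') = lexlt p p' || ((p == p') && lexlt s s').
Proof.
elim: p p' => [|x p IH] [|y p'] //= [] Hs.
rewrite IH // eqseq_cons.
by case: (ltngtP x y) => //= Hxy; subst; rewrite ?eqxx.
Qed.

Lemma count_sub_lt (T : eqType) (a b : pred T) (s : seq T) (z : T) :
  subpred a b -> z \in s -> b z -> ~~ a z -> count a s < count b s.
Proof.
move=> sub_ab; elim: s => //= c s IH; rewrite in_cons => /orP[/eqP<-|zs] bz naz.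
- by rewrite bz (negbTE naz) /= add0n ltnS; exact: sub_count.
- have := IH zs bz naz; case: (a c) (sub_ab c) => [->//|_]; case: (b c) => /=; lia.
Qed.

Definition same_bag (lvl par slot : nat -> nat) u w :=
  [&& lvl u == lvl w, slot u == slot w & (lvl u == 0) || (par u == par w)].

Definition shadow (par : nat -> nat) (sh : nat -> nat -> bool) s v :=
  (s == par v) || sh (par v) s.

Lemma same_bag_refl lvl par slot u : same_bag lvl par slot u u.
Proof. by rewrite /same_bag !eqxx orbT. Qed.

Lemma same_bag_sym lvl par slot u w : same_bag lvl par slot u w = same_bag lvl par slot w u.
Proof.
rewrite /same_bag; case: (lvl u =P lvl w) => [E|]; last by case: (lvl w =P lvl u) => // /esym.
by rewrite E !eqxx [slot u == _]eq_sym [par u == _]eq_sym.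
Qed.

Lemma layout_weaken V E t t' tr ps :
  t <= t' -> track_layout V E t tr ps -> track_layout V E t' tr ps.
Proof. by move=> le_tt' [H1 H2 H3 H4]; split => // u uV; exact: leq_trans (H1 u uV) le_tt'. Qed.

Section LayeredLayout.
Variables (V : seq nat) (R : nat -> nat -> bool) (t : nat).
Variables (trk ord lvl par slot : nat -> nat) (sh : nat -> nat -> bool).
Hypothesis layer_layout : track_layout V (fun u w => R u w && (lvl u == lvl w)) t trk ord.
Hypothesis edge_in_bag : forall u w, u \in V -> w \in V -> R u w -> lvl u = lvl w ->
  same_bag lvl par slot u w.
Hypothesis edge_across : forall u w, u \in V -> w \in V -> R u w -> lvl u <> lvl w ->
  (lvl w = (lvl u).+1 /\ shadow par sh u w) \/ (lvl u = (lvl w).+1 /\ shadow par sh w u).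
Hypothesis parP : forall v, v \in V -> 0 < lvl v -> par v \in V /\ (lvl (par v)).+1 = lvl v.
Hypothesis shadow_edge : forall a s, a \in V -> sh a s -> s \in V /\ R a s /\ lvl s = lvl a.
Hypothesis shadow_clique : forall a s s', a \in V -> sh a s -> sh a s' -> s = s' \/ R s s'.

Definition block v := [:: slot v; trk v; ord v].
Fixpoint lineage n v := if n is n'.+1 then lineage n' (par v) ++ block v else block v.
Definition code v := lineage (lvl v) v.
Definition par_code v := if lvl v is n.+1 then lineage n (par v) else [::].

Lemma size_lineage n v : size (lineage n v) = 3 * n.+1.
Proof. by elim: n v => [|n IH] v //=; rewrite size_cat IH /=; lia. Qed.

Lemma size_code v : size (code v) = 3 * (lvl v).+1.
Proof. exact: size_lineage. Qed.

Lemma codeE v : code v = par_code v ++ block v.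
Proof. by rewrite /code /par_code; case: (lvl v). Qed.

Lemma size_par_code v : size (par_code v) = 3 * lvl v.
Proof. by rewrite /par_code; case: (lvl v) => // n; rewrite size_lineage; lia. Qed.

Lemma par_codeE v : v \in V -> 0 < lvl v -> par_code v = code (par v).
Proof.
move=> vV lv_gt0; have [_ lvl_par] := parP vV lv_gt0.
by rewrite /par_code /code; move: lvl_par; case: (lvl v) lv_gt0 => // n _ [->].
Qed.

Lemma trk_layer_edge u w : u \in V -> w \in V -> R u w -> lvl u = lvl w -> trk u <> trk w.
Proof.
case: layer_layout => _ _ H _ uV wV Ruw luw; apply: (H u w uV wV).
by rewrite Ruw luw eqxx.
Qed.

Lemma code_inj u w : u \in V -> w \in V -> lvl u = lvl w -> code u = code w -> u = w.
Proof.
move=> uV wV luw; rewrite !codeE => /eqP.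
rewrite eqseq_cat; last by rewrite !size_par_code luw.
case/andP=> _ /eqP [] _ Etrk Eord; case: layer_layout => _ H _ _; exact: H.
Qed.

Lemma trk_shadow a s : a \in V -> sh a s -> trk s <> trk a.
Proof.
move=> aV sh_as; have [sV [Ras las]] := shadow_edge aV sh_as.
by apply/nesym; exact: trk_layer_edge.
Qed.

Lemma trk_shadow_inj a s s' : a \in V -> sh a s -> sh a s' -> trk s = trk s' -> s = s'.
Proof.
move=> aV sh_s sh_s' Etrk; have [//|Rss] := shadow_clique aV sh_s sh_s'.
have [sV [_ ls]] := shadow_edge aV sh_s; have [s'V [_ ls']] := shadow_edge aV sh_s'.
by case: (trk_layer_edge sV s'V Rss (etrans ls (esym ls'))).
Qed.

(* Equal parent codes reduce the comparison to the blocks, where the slots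
   agree and the inner layout forbids the crossing. *)
Lemma no_crossing_in_layer u w x y : u \in V -> w \in V -> x \in V -> y \in V ->
  R u w -> R x y -> lvl u = lvl w -> lvl x = lvl y -> lvl u = lvl x ->
  trk u = trk x -> trk w = trk y -> ~~ (lexlt (code u) (code x) && lexlt (code y) (code w)).
Proof.
move=> uV wV xV yV Ruw Rxy luw lxy lux tux twy.
have /and3P[_ /eqP Suw Puw] := edge_in_bag uV wV Ruw luw.
have /and3P[_ /eqP Sxy Pxy] := edge_in_bag xV yV Rxy lxy.
have Cw : par_code w = par_code u.
  by rewrite /par_code -luw; case: (lvl u) Puw => // n /= /eqP->.
have Cy : par_code y = par_code x.
  by rewrite /par_code -lxy; case: (lvl x) Pxy => // n /= /eqP->.
rewrite !codeE Cw Cy !lexlt_cat ?size_par_code -?lux //.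
case: (boolP (lexlt (par_code u) (par_code x))) => [lt_ux|_] /=.
  have -> : lexlt (par_code x) (par_code u) = false.
    by apply/negP=> lt_xu; move: (lexlt_trans lt_ux lt_xu); rewrite lexlt_irr.
  by apply/negP=> /andP[/eqP E _]; rewrite E lexlt_irr in lt_ux.
apply/negP => /andP[/andP[/eqP Ep lt1] /orP[]]; first by rewrite Ep lexlt_irr.
case/andP=> _; move: lt1; rewrite /block /= -Suw -Sxy tux twy !ltnn !eqxx /= !andbF !orbF.
case: (ltngtP (slot u) (slot x)) => //= _ ord_ux ord_yw.
case: layer_layout => _ _ _ H.
have R1 : R u w && (lvl u == lvl w) by rewrite Ruw luw eqxx.
have R2 : R x y && (lvl x == lvl y) by rewrite Rxy lxy eqxx.
exact: (H u w x y uV wV xV yV R1 R2 tux twy (trk_layer_edge uV wV Ruw luw)).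
Qed.

Lemma shadow_of_distinct_parents a a' s s' : a \in V -> a' \in V -> lvl a = lvl a' ->
  trk a = trk a' -> trk s = trk s' -> (s == a) || sh a s -> (s' == a') || sh a' s' ->
  lexlt (code a') (code a) -> ~~ lexlt (code s) (code s').
Proof.
move=> aV a'V laa' taa' tss' shs shs' lt_a'a; apply/negP => lt_ss'.
case/orP: shs => [/eqP Esa | sh_as]; case/orP: shs' => [/eqP Es'a' | sh_as'].
- by subst s s'; move: (lexlt_trans lt_a'a lt_ss'); rewrite lexlt_irr.
- by subst s; apply: (trk_shadow a'V sh_as'); rewrite -tss' taa'.
- by subst s'; apply: (trk_shadow aV sh_as); rewrite tss' taa'.
- have [s'V [Ra's' ls']] := shadow_edge a'V sh_as'.
  have [sV [Ras ls]] := shadow_edge aV sh_as.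
  have := no_crossing_in_layer a'V s'V aV sV Ra's' Ras (esym ls') (esym ls) (esym laa')
    (esym taa') (esym tss').
  by rewrite lt_a'a lt_ss'.
Qed.

Lemma shadow_of_common_parent a s s' : a \in V -> trk s = trk s' ->
  (s == a) || sh a s -> (s' == a) || sh a s' -> s = s'.
Proof.
move=> aV tss' /orP[/eqP Esa | sh_as] /orP[/eqP Es'a | sh_as'].
- by rewrite Esa Es'a.
- by case: (trk_shadow aV sh_as'); rewrite -tss' Esa.
- by case: (trk_shadow aV sh_as); rewrite tss' Es'a.
- exact: (trk_shadow_inj aV sh_as sh_as').
Qed.

(* Edges climbing from s to v and from s' to v' are compared through the
   parents of v and v', whose codes prefix those of v and v'. *)
Lemma no_crossing_across s v s' v' : s \in V -> v \in V -> s' \in V -> v' \in V ->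
  lvl v = (lvl s).+1 -> lvl v' = (lvl s').+1 -> lvl s = lvl s' ->
  trk s = trk s' -> trk (par v) = trk (par v') -> shadow par sh s v -> shadow par sh s' v' ->
  ~~ (lexlt (code s) (code s') && lexlt (code v') (code v)).
Proof.
move=> sV vV s'V v'V lv lv' lss' tss' tpar shv shv'.
have v_gt0 : 0 < lvl v by rewrite lv.
have v'_gt0 : 0 < lvl v' by rewrite lv'.
have [aV la] := parP vV v_gt0; have [a'V la'] := parP v'V v'_gt0.
have {}la : lvl (par v) = lvl s by move: la; rewrite lv => -[].
have {}la' : lvl (par v') = lvl s' by move: la'; rewrite lv' => -[].
have laa' : lvl (par v) = lvl (par v') by rewrite la la' lss'.
rewrite (codeE v) (codeE v') (par_codeE vV v_gt0) (par_codeE v'V v'_gt0) lexlt_cat;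
  last by rewrite !size_code laa'.
apply/negP => /andP[lt_ss' /orP[lt_a'a | /andP[/eqP Eaa' _]]].
- by move: lt_ss'; apply/negP; exact: shadow_of_distinct_parents shv shv' lt_a'a.
- have Ea : par v' = par v by apply: code_inj.
  move: shv'; rewrite /shadow Ea => shv'.
  have Ess' := shadow_of_common_parent aV tss' shv shv'.
  by rewrite Ess' lexlt_irr in lt_ss'.
Qed.

(* Vertices on a common track share their layer mod 3, their inner track and
   their parent's inner track; positions follow layers, then lineages. *)
Definition par_trk v := if lvl v is 0 then 0 else trk (par v).
Definition layered_track v := (par_trk v * t + trk v) * 3 + lvl v %% 3.
Definition key v := lvl v :: code v.
Definition layered_pos v := count (fun w => lexlt (key w) (key v)) V.

Lemma par_trkE v : 0 < lvl v -> par_trk v = trk (par v).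
Proof. by rewrite /par_trk; case: (lvl v). Qed.

Lemma par_trk_lt v : v \in V -> par_trk v < t.
Proof.
move=> vV; case: layer_layout => trk_lt _ _ _; rewrite /par_trk.
case E: (lvl v) => [|n]; first by move: (trk_lt v vV); lia.
have [parV _] := parP vV (ltac:(by rewrite E) : 0 < lvl v); exact: trk_lt.
Qed.

Lemma layered_track_lt v : v \in V -> layered_track v < 3 * t * t.
Proof.
move=> vV; case: layer_layout => trk_lt _ _ _.
have p_lt := par_trk_lt vV; have t_lt := trk_lt v vV.
have : (par_trk v).+1 * t <= t * t by rewrite leq_mul2r p_lt orbT.
rewrite /layered_track mulSn -mulnA; have := ltn_pmod (lvl v) (isT : 0 < 3); lia.
Qed.

Lemma layered_trackP u w : u \in V -> w \in V -> layered_track u = layered_track w ->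
  [/\ lvl u %% 3 = lvl w %% 3, trk u = trk w & par_trk u = par_trk w].
Proof.
move=> uV wV E; case: layer_layout => trk_lt _ _ _.
have tu := trk_lt u uV; have tw := trk_lt w wV.
have pu := par_trk_lt uV; have pw := par_trk_lt wV.
have E3 := congr1 (modn^~ 3) E; rewrite /layered_track /= !modnMDl !modn_mod in E3.
have D3 := congr1 (divn^~ 3) E.
rewrite /layered_track /= !divnMDl // !divn_small ?ltn_pmod // !addn0 in D3.
have Et := congr1 (modn^~ t) D3; rewrite /= !modnMDl !modn_small // in Et.
have Dt := congr1 (divn^~ t) D3.
by rewrite /= !divnMDl ?(leq_ltn_trans _ tu) // !divn_small // !addn0 in Dt.
Qed.

Lemma key_total u w : [|| lexlt (key u) (key w), lexlt (key w) (key u) | key u == key w].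
Proof.
rewrite /key /=; case: (ltngtP (lvl u) (lvl w)) => //= E.
rewrite eqseq_cons E eqxx /=.
case: (code u =P code w) => [->|/eqP neq]; first by rewrite !orbT.
have Hs : size (code u) = size (code w) by rewrite !size_code E.
by case/orP: (lexlt_total Hs neq) => ->; rewrite ?orbT.
Qed.

Lemma layered_pos_lt u w : u \in V -> lexlt (key u) (key w) -> layered_pos u < layered_pos w.
Proof.
move=> uV lt_uw; apply: (count_sub_lt (z := u)) => //; last by rewrite lexlt_irr.
by move=> a lt_au; exact: lexlt_trans lt_au lt_uw.
Qed.

Lemma layered_pos_ltP u w : u \in V -> w \in V ->
  layered_pos u < layered_pos w -> lexlt (key u) (key w).
Proof.
move=> uV wV lt_uw; case/or3P: (key_total u w) => // H.
- by move: (layered_pos_lt wV H); lia.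
- by move: lt_uw; rewrite /layered_pos (eqP H) ltnn.
Qed.

Lemma layered_pos_inj u w : u \in V -> w \in V ->
  layered_pos u = layered_pos w -> key u = key w.
Proof.
move=> uV wV E; case/or3P: (key_total u w) => [H|H|/eqP//].
- by move: (layered_pos_lt uV H); lia.
- by move: (layered_pos_lt wV H); lia.
Qed.

Lemma lexlt_key a b : lexlt (key a) (key b) ->
  lvl a < lvl b \/ (lvl a = lvl b /\ lexlt (code a) (code b)).
Proof. by rewrite /key /=; case/orP=> [->|/andP[/eqP-> ->]]; [left|right]. Qed.

Lemma lexlt_key_shift u w x y d : lvl w = lvl u + d -> lvl y = lvl x + d ->
  lexlt (key u) (key x) -> lexlt (key y) (key w) ->
  [/\ lvl u = lvl x, lexlt (code u) (code x) & lexlt (code y) (code w)].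
Proof.
move=> lw ly /lexlt_key K1 /lexlt_key K2.
by case: K1 => [lt1|[E1 c1]]; case: K2 => [lt2|[E2 c2]] //; exfalso; lia.
Qed.

Lemma layered_no_crossing u w x y : u \in V -> w \in V -> x \in V -> y \in V ->
  R u w -> R x y -> layered_track u = layered_track x -> layered_track w = layered_track y ->
  ~ (layered_pos u < layered_pos x /\ layered_pos y < layered_pos w).
Proof.
move=> uV wV xV yV Ruw Rxy Tux Twy [lt_ux lt_yw].
have [mux tux pux] := layered_trackP uV xV Tux.
have [mwy twy pwy] := layered_trackP wV yV Twy.
have K1 := layered_pos_ltP uV xV lt_ux; have K2 := layered_pos_ltP yV wV lt_yw.
case: (lvl u =P lvl w) => luw; case: (lvl x =P lvl y) => lxy.
- have [lux c1 c2] := lexlt_key_shift (etrans (esym luw) (esym (addn0 _)))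
    (etrans (esym lxy) (esym (addn0 _))) K1 K2.
  by have := no_crossing_in_layer uV wV xV yV Ruw Rxy luw lxy lux tux twy; rewrite c1 c2.
- by case: (edge_across xV yV Rxy lxy) => [][l _]; move: mux mwy luw l; clear; lia.
- by case: (edge_across uV wV Ruw luw) => [][l _]; move: mux mwy lxy l; clear; lia.
case: (edge_across uV wV Ruw luw) => [][lw shw];
  case: (edge_across xV yV Rxy lxy) => [][ly shy];
  try by move: mux mwy lw ly; clear; lia.
- have [lux c1 c2] := lexlt_key_shift (etrans lw (esym (addn1 _))) (etrans ly (esym (addn1 _)))
    K1 K2.
  have tp : trk (par w) = trk (par y) by rewrite -!par_trkE ?lw ?ly.
  by have := no_crossing_across uV wV xV yV lw ly lux tux tp shw shy; rewrite c1 c2.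
- have [lyw c2 c1] := lexlt_key_shift (etrans ly (esym (addn1 _))) (etrans lw (esym (addn1 _)))
    K2 K1.
  have tp : trk (par x) = trk (par u) by rewrite -!par_trkE ?lw ?ly.
  by have := no_crossing_across yV xV wV uV ly lw lyw (esym twy) tp shy shw; rewrite c1 c2.
Qed.

Lemma layered_track_layout : has_track_layout V R (3 * t * t).
Proof.
exists layered_track, layered_pos; split.
- exact: layered_track_lt.
- move=> u w uV wV Tuw Puw; have [luw cuw] := layered_pos_inj uV wV Puw.
  exact: code_inj.
- move=> u w uV wV Ruw Tuw; have [m3 tuw _] := layered_trackP uV wV Tuw.
  case: (lvl u =P lvl w) => luw; first exact: (trk_layer_edge uV wV Ruw luw tuw).
  by case: (edge_across uV wV Ruw luw) => [][l _]; move: m3 l; clear; lia.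
- by move=> u w x y uV wV xV yV Ruw Rxy Tux Twy _; exact: layered_no_crossing.
Qed.

End LayeredLayout.

Record layerings := Layerings {
  lvl1 : nat -> nat; par1 : nat -> nat; slot1 : nat -> nat; shad1 : nat -> seq nat;
  lvl2 : nat -> nat; par2 : nat -> nat; slot2 : nat -> nat;
  lvl3 : nat -> nat; par3 : nat -> nat }.

Definition shad2 L a := [seq p <- shad1 L a | lvl2 L p == lvl2 L a].
Definition in_shad1 L a s := s \in shad1 L a.
Definition in_shad2 L a s := s \in shad2 L a.

(* Three nested layerings: each layer of [lvl1] is split by [lvl2] into layers
   whose edges all join a vertex to its [par3], one [lvl3]-level lower;
   [shad1 a] lists the neighbours of [a] in its own layer seen by the vertices
   stacked above [a]. *)
Record stack_inv (V : seq nat) (E : nat -> nat -> bool) (F : seq (nat * nat * nat))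
    (L : layerings) : Prop := {
  inv_edge_mem : forall u w, E u w -> u \in V /\ w \in V;
  inv_edge_sym : forall u w, E u w -> E w u;
  inv_edge_irr : forall u, E u u = false;
  inv_face : forall x y z, (x, y, z) \in F ->
    [/\ x \in V, y \in V & z \in V] /\ [/\ E x y, E y z & E x z];
  inv_face_flat : forall x y z, (x, y, z) \in F ->
    lvl1 L x = lvl1 L z -> lvl1 L y = lvl1 L z -> x \in shad1 L z /\ y \in shad1 L z;
  inv_face_up1 : forall x y z, (x, y, z) \in F -> forall w p,
    w \in [:: x; y; z] -> p \in [:: x; y; z] ->
    lvl1 L p = (lvl1 L w).+1 -> shadow (par1 L) (in_shad1 L) w p;
  inv_face_up2 : forall x y z, (x, y, z) \in F -> forall w s p,
    w \in [:: x; y; z] -> s \in [:: x; y; z] -> p \in [:: x; y; z] ->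
    lvl1 L s = (lvl1 L w).+1 -> lvl1 L p = lvl1 L s -> lvl2 L p = (lvl2 L s).+1 ->
    shadow (par2 L) (in_shad2 L) s p;
  inv_bag1 : forall u w, u \in V -> w \in V -> E u w -> lvl1 L u = lvl1 L w ->
    same_bag (lvl1 L) (par1 L) (slot1 L) u w;
  inv_across1 : forall u w, u \in V -> w \in V -> E u w -> lvl1 L u <> lvl1 L w ->
    (lvl1 L w = (lvl1 L u).+1 /\ shadow (par1 L) (in_shad1 L) u w) \/
    (lvl1 L u = (lvl1 L w).+1 /\ shadow (par1 L) (in_shad1 L) w u);
  inv_par1 : forall v, v \in V -> 0 < lvl1 L v ->
    par1 L v \in V /\ (lvl1 L (par1 L v)).+1 = lvl1 L v;
  inv_shad1 : forall a s, a \in V -> s \in shad1 L a ->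
    [/\ s \in V, E a s & lvl1 L s = lvl1 L a];
  inv_shad1_clique : forall a s s', a \in V -> s \in shad1 L a -> s' \in shad1 L a ->
    s = s' \/ E s s';
  inv_bag2 : forall u w, u \in V -> w \in V -> E u w ->
    lvl1 L u = lvl1 L w -> lvl2 L u = lvl2 L w -> same_bag (lvl2 L) (par2 L) (slot2 L) u w;
  inv_across2 : forall u w, u \in V -> w \in V -> E u w ->
    lvl1 L u = lvl1 L w -> lvl2 L u <> lvl2 L w ->
    (lvl2 L w = (lvl2 L u).+1 /\ shadow (par2 L) (in_shad2 L) u w) \/
    (lvl2 L u = (lvl2 L w).+1 /\ shadow (par2 L) (in_shad2 L) w u);
  inv_par2 : forall v, v \in V -> 0 < lvl2 L v ->
    par2 L v \in V /\ (lvl2 L (par2 L v)).+1 = lvl2 L v;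
  inv_path3 : forall u w, u \in V -> w \in V -> E u w ->
    lvl1 L u = lvl1 L w -> lvl2 L u = lvl2 L w ->
    (lvl3 L w = (lvl3 L u).+1 /\ u = par3 L w) \/ (lvl3 L u = (lvl3 L w).+1 /\ w = par3 L u);
  inv_par3 : forall v, v \in V -> 0 < lvl3 L v ->
    par3 L v \in V /\ (lvl3 L (par3 L v)).+1 = lvl3 L v;
  inv_shad2 : forall v, v \in V -> shad2 L v = if lvl3 L v == 0 then [::] else [:: par3 L v]
}.

Section StackLayout.
Variables (V : seq nat) (E : nat -> nat -> bool) (F : seq (nat * nat * nat)) (L : layerings).
Hypothesis HI : stack_inv V E F L.

Definition E1 u w := E u w && (lvl1 L u == lvl1 L w).
Definition E2 u w := E1 u w && (lvl2 L u == lvl2 L w).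

(* The layers of [lvl3] are edgeless, so a 1-track inner layout suffices. *)
Lemma E2_layout : has_track_layout V E2 3.
Proof.
have lvl3_edge (u w : nat) : u \in V -> w \in V -> E2 u w -> lvl3 L u <> lvl3 L w.
  move=> uV wV /andP[/andP[Euw /eqP l1] /eqP l2] l3.
  by case: (inv_path3 HI uV wV Euw l1 l2) => [][]; rewrite l3 => /n_Sn.
apply: (@layered_track_layout V E2 1 (fun _ => 0) id (lvl3 L) (par3 L) id (fun _ _ => false)).
- split => // u w uV wV /andP[Euw /eqP l3]; by case: (lvl3_edge u w uV wV Euw l3).
- by move=> u w uV wV Euw l3; case: (lvl3_edge u w uV wV Euw l3).
- move=> u w uV wV /andP[/andP[Euw /eqP l1] /eqP l2] _.
  case: (inv_path3 HI uV wV Euw l1 l2) => [][l3 Ep]; [left|right]; split => //;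
    by rewrite /shadow Ep eqxx.
- exact: inv_par3 HI.
- by [].
- by [].
Qed.

Lemma E1_layout : has_track_layout V E1 27.
Proof.
have [trk [ord lay]] := E2_layout.
apply: (@layered_track_layout V E1 3 trk ord (lvl2 L) (par2 L) (slot2 L) (in_shad2 L) lay).
- move=> u w uV wV /andP[Euw /eqP l1] l2; exact: (inv_bag2 HI uV wV Euw l1 l2).
- move=> u w uV wV /andP[Euw /eqP l1] l2; exact: (inv_across2 HI uV wV Euw l1 l2).
- exact: inv_par2 HI.
- move=> a s aV; rewrite /in_shad2 /shad2 mem_filter => /andP[/eqP l2 sh1].
  by have [sV Eas l1] := inv_shad1 HI aV sh1; rewrite /E1 Eas l1 eqxx.
- move=> a s s' aV; rewrite /in_shad2 (inv_shad2 HI aV); case: (lvl3 L a == 0) => //.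
  by rewrite !inE => /eqP-> /eqP->; left.
Qed.

Lemma E_layout : has_track_layout V E (3 * 27 * 27).
Proof.
have [trk [ord lay]] := E1_layout.
apply: (@layered_track_layout V E 27 trk ord (lvl1 L) (par1 L) (slot1 L) (in_shad1 L) lay).
- exact: inv_bag1 HI.
- exact: inv_across1 HI.
- exact: inv_par1 HI.
- by move=> a s aV sh1; have [] := inv_shad1 HI aV sh1.
- exact: inv_shad1_clique HI.
Qed.

End StackLayout.
Definition min_over (f : nat -> nat) (s : seq nat) :=
  foldr (fun a b => minn (f a) b) (f (head 0 s)) s.

Lemma min_over_le f s a : a \in s -> min_over f s <= f a.
Proof.
rewrite /min_over; move: (f (head 0 s)) => d.
elim: s => //= b s IH; rewrite inE => /orP[/eqP->|/IH H]; first exact: geq_minl.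
exact: leq_trans (geq_minr _ _) H.
Qed.

Lemma foldr_min_cases f d s : foldr (fun a b => minn (f a) b) d s = d \/
  exists2 a : nat, a \in s & f a = foldr (fun a b => minn (f a) b) d s.
Proof.
elim: s => [|c s IH] /=; first by left.
case: (leqP (f c) (foldr (fun a b => minn (f a) b) d s)) => H.
  by right; exists c; rewrite ?inE ?eqxx.
case: IH => [E1|[a Ha E1]]; first by left; rewrite E1.
by right; exists a; rewrite ?inE ?Ha ?orbT.
Qed.

Lemma min_over_mem f s : s != [::] -> exists2 a : nat, a \in s & f a = min_over f s.
Proof.
case: s => // b s _; rewrite /min_over /=.
case: (foldr_min_cases f (f b) (b :: s)) => /= [->|//].
by exists b; rewrite ?inE ?eqxx.
Qed.

Section Stack.
Variables (V : seq nat) (E : nat -> nat -> bool) (F : seq (nat * nat * nat)) (L : layerings)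
  (x y z v : nat).
Hypothesis HI : stack_inv V E F L.
Hypothesis face_xyz : (x, y, z) \in F.
Hypothesis v_fresh : v \notin V.

Definition tri := [:: x; y; z].
Definition lo := minn (lvl1 L x) (minn (lvl1 L y) (lvl1 L z)).
Definition hi1 := [seq w <- tri | lvl1 L w == lo.+1].
Definition lo2 := min_over (lvl2 L) hi1.
Definition lvl2v := if hi1 is [::] then 0 else lo2.+1.
Definition hi2 := [seq w <- hi1 | lvl2 L w == lvl2v].
Definition top3 :=
  match hi1 with [:: s] => s | [:: s; p] => if lvl3 L p < lvl3 L s then s else p | _ => v end.

(* Stacking v into the face xyz: v goes one [lvl1]-level above the lowest
   face vertex and joins the bag of the face vertices on that level ([hi1]);
   within that layer it goes one [lvl2]-level above the lowest of them and
   extends the [lvl3]-path of the face vertex sharing its new level ([hi2]). *)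
Definition L' := Layerings
  [eta lvl1 L with v |-> lo.+1]
  [eta par1 L with v |-> if hi1 is p :: _ then par1 L p else z]
  [eta slot1 L with v |-> if hi1 is p :: _ then slot1 L p else v]
  [eta shad1 L with v |-> hi1]
  [eta lvl2 L with v |-> lvl2v]
  [eta par2 L with v |-> if hi2 is c :: _ then par2 L c else top3]
  [eta slot2 L with v |-> if hi2 is c :: _ then slot2 L c else v]
  [eta lvl3 L with v |-> if hi2 is c :: _ then (lvl3 L c).+1 else 0]
  [eta par3 L with v |-> if hi2 is c :: _ then c else v].
Definition E' := add_vertex E v x y z.

Lemma neq_fresh u : u \in V -> u != v.
Proof. by move=> uV; apply: contraNneq v_fresh => <-. Qed.

Lemma face_xyz_facts : [/\ x \in V, y \in V & z \in V] /\ [/\ E x y, E y z & E x z].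
Proof. exact (inv_face HI face_xyz). Qed.

Lemma tri_mem w : w \in tri -> w \in V.
Proof. have [[xV yV zV] _] := face_xyz_facts; by rewrite !inE => /or3P[]/eqP->. Qed.

Lemma tri_adj a b : a \in tri -> b \in tri -> a = b \/ E a b.
Proof.
have [_ [Exy Eyz Exz]] := face_xyz_facts; have S := inv_edge_sym HI.
rewrite !inE => /or3P[]/eqP-> /or3P[]/eqP->; by [left|right; auto].
Qed.

Lemma tri_uniq : uniq tri.
Proof.
have [_ [Exy Eyz Exz]] := face_xyz_facts; have Irr := inv_edge_irr HI.
have nxy : x != y by apply/eqP => Heq; move: Exy; rewrite Heq Irr.
have nyz : y != z by apply/eqP => Heq; move: Eyz; rewrite Heq Irr.
have nxz : x != z by apply/eqP => Heq; move: Exz; rewrite Heq Irr.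
by rewrite /tri /= !inE (negbTE nxy) (negbTE nxz) nyz.
Qed.

Lemma lo_le w : w \in tri -> lo <= lvl1 L w.
Proof. rewrite /lo !inE => /or3P[]/eqP->; lia. Qed.

Lemma lo_attained : exists2 w0, w0 \in tri & lvl1 L w0 = lo.
Proof.
rewrite /lo; case: (leqP (lvl1 L x) (minn (lvl1 L y) (lvl1 L z))) => H.
  by exists x; rewrite ?inE ?eqxx.
case: (leqP (lvl1 L y) (lvl1 L z)) => H2.
  by exists y; rewrite ?inE ?eqxx ?orbT.
by exists z; rewrite ?inE ?eqxx ?orbT.
Qed.

Lemma lvl1_tri w : w \in tri -> lvl1 L w = lo \/ lvl1 L w = lo.+1.
Proof.
move=> wN; have [w0 w0N E0] := lo_attained; have Hm := lo_le wN.
case: (tri_adj wN w0N) => [->|Eww0]; first by left.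
case: (lvl1 L w =P lvl1 L w0) => Hl; first by left; rewrite Hl.
by case: (inv_across1 HI (tri_mem wN) (tri_mem w0N) Eww0 Hl) => [][l _]; lia.
Qed.

Lemma hi1P p : (p \in hi1) = (p \in tri) && (lvl1 L p == lo.+1).
Proof. by rewrite /hi1 mem_filter andbC. Qed.

Lemma lvl1_notin_hi1 w : w \in tri -> w \notin hi1 -> lvl1 L w = lo.
Proof. move=> wN; rewrite hi1P wN /=; case: (lvl1_tri wN) => ->; by rewrite ?eqxx. Qed.

Lemma hi1_tri p : p \in hi1 -> p \in tri.
Proof. by rewrite hi1P => /andP[]. Qed.

Lemma hi1_lvl1 p : p \in hi1 -> lvl1 L p = lo.+1.
Proof. by rewrite hi1P => /andP[_ /eqP]. Qed.

Lemma hi1_mem p : p \in hi1 -> p \in V.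
Proof. by move/hi1_tri/tri_mem. Qed.

Lemma hi1_adj p p' : p \in hi1 -> p' \in hi1 -> p = p' \/ E p p'.
Proof. move=> /hi1_tri pN /hi1_tri p'N; exact: tri_adj. Qed.

Lemma hi1_same_bag p p' : p \in hi1 -> p' \in hi1 -> same_bag (lvl1 L) (par1 L) (slot1 L) p p'.
Proof.
move=> pP p'P; case: (hi1_adj pP p'P) => [->|Ep]; first exact: same_bag_refl.
apply (inv_bag1 HI (hi1_mem pP) (hi1_mem p'P) Ep); by rewrite !hi1_lvl1.
Qed.

Lemma hi1_lvl2_le p p' : p \in hi1 -> p' \in hi1 -> lvl2 L p <= (lvl2 L p').+1.
Proof.
move=> pP p'P; case: (hi1_adj pP p'P) => [->|Ep]; first by [].
case: (lvl2 L p =P lvl2 L p') => [->//|Hn].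
have El : lvl1 L p = lvl1 L p' by rewrite !hi1_lvl1.
by case: (inv_across2 HI (hi1_mem pP) (hi1_mem p'P) Ep El Hn) => [][l _]; lia.
Qed.

Lemma hi1_nil_lvl1 w : hi1 = [::] -> w \in tri -> lvl1 L w = lo.
Proof. move=> H wN; apply: lvl1_notin_hi1 => //; by rewrite H. Qed.

Lemma lo2_le p : p \in hi1 -> lo2 <= lvl2 L p.
Proof. exact: min_over_le. Qed.

Lemma lo2_attained : hi1 != [::] -> exists2 p0, p0 \in hi1 & lvl2 L p0 = lo2.
Proof. exact: min_over_mem. Qed.

Lemma lvl2_hi1 p : p \in hi1 -> lvl2 L p = lo2 \/ lvl2 L p = lo2.+1.
Proof.
move=> pP; have ne : hi1 != [::] by apply/eqP => H; rewrite H in pP.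
have [p0 p0P E0] := lo2_attained ne; have := hi1_lvl2_le pP p0P; have := lo2_le pP; lia.
Qed.

Lemma lvl2vE : hi1 != [::] -> lvl2v = lo2.+1.
Proof. by rewrite /lvl2v; case: hi1. Qed.

Lemma hi2P c : (c \in hi2) = (c \in hi1) && (lvl2 L c == lo2.+1).
Proof.
rewrite /hi2 mem_filter andbC; case E1: (c \in hi1) => //=.
by rewrite lvl2vE //; apply/eqP => H; rewrite H in E1.
Qed.

Lemma hi1_uniq : uniq hi1.
Proof. exact: filter_uniq tri_uniq. Qed.

Lemma hi2_uniq : uniq hi2.
Proof. exact: filter_uniq hi1_uniq. Qed.

(* Two vertices of [hi2], one of [hi1] on level [lo2] and one on level [lo]
   would be four distinct face vertices. *)
Lemma hi2_small : hi2 = [::] \/ exists c, hi2 = [:: c].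
Proof.
case HC: hi2 => [|c [|c' r]]; [by left|by right; exists c|exfalso].
have cC : c \in hi2 by rewrite HC inE eqxx.
have c'C : c' \in hi2 by rewrite HC !inE eqxx orbT.
have ncc' : c != c' by move: hi2_uniq; rewrite HC /= inE negb_or => /andP[/andP[]].
move: cC c'C; rewrite !hi2P => /andP[cP /eqP lc] /andP[c'P /eqP lc'].
have ne : hi1 != [::] by apply/eqP => H; rewrite H in cP.
have [p0 p0P E0] := lo2_attained ne.
have [w0 w0N Ew0] := lo_attained.
have d1 : forall p, p \in hi1 -> (w0 == p) = false.
  move=> p pP; apply/eqP => Heq; move: (hi1_lvl1 pP); rewrite -Heq Ew0; lia.
have d2 : (p0 == c) = false by apply/eqP => Heq; move: lc; rewrite -Heq E0; lia.
have d3 : (p0 == c') = false by apply/eqP => Heq; move: lc'; rewrite -Heq E0; lia.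
have Hu : uniq [:: w0; p0; c; c'].
  by rewrite /= !inE !negb_or (d1 _ p0P) (d1 _ cP) (d1 _ c'P) d2 d3 ncc'.
have Hs : {subset [:: w0; p0; c; c'] <= tri}.
  move=> a; rewrite !in_cons in_nil orbF => /or4P[]/eqP->;
    [exact: w0N | exact: hi1_tri p0P | exact: hi1_tri cP | exact: hi1_tri c'P].
by move: (uniq_leq_size Hu Hs).
Qed.

Lemma size_hi1 : size hi1 <= 2.
Proof.
have [w0 w0N Ew0] := lo_attained.
have Hn : w0 \notin hi1 by apply/negP; rewrite hi1P Ew0 => /andP[_ /eqP]; lia.
have Hs : {subset w0 :: hi1 <= tri} by move=> a; rewrite in_cons => /orP[/eqP->//|/hi1_tri].
have Hu : uniq (w0 :: hi1) by rewrite /= Hn hi1_uniq.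
by move: (uniq_leq_size Hu Hs).
Qed.

Lemma E'_old u w : u \in V -> w \in V -> E' u w = E u w.
Proof.
move=> uV wV.
by rewrite /E' /add_vertex (negbTE (neq_fresh uV)) (negbTE (neq_fresh wV)) /= !orbF.
Qed.

Lemma E_fresh_l w : E v w = false.
Proof. apply/negP => /(inv_edge_mem HI) [vV _]; by move: v_fresh; rewrite vV. Qed.
Lemma E_fresh_r w : E w v = false.
Proof. apply/negP => /(inv_edge_mem HI) [_ vV]; by move: v_fresh; rewrite vV. Qed.

Lemma E'_fresh_l w : w \in V -> E' v w = (w \in tri).
Proof.
move=> wV; rewrite /E' /add_vertex E_fresh_l eqxx (negbTE (neq_fresh wV)) /=.
by case: (w \in tri).
Qed.
Lemma E'_fresh_r w : w \in V -> E' w v = (w \in tri).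
Proof.
move=> wV; rewrite /E' /add_vertex E_fresh_r eqxx (negbTE (neq_fresh wV)) /=.
by case: (w \in tri).
Qed.
Lemma E'_fresh_irr : E' v v = false.
Proof.
rewrite /E' /add_vertex E_fresh_l eqxx /=.
by apply/negP => /orP[] /tri_mem; rewrite (negbTE v_fresh).
Qed.
Lemma E'_ext u w : E u w -> E' u w.
Proof. by rewrite /E' /add_vertex => ->. Qed.

Section Old.
Variable u : nat.
Hypothesis uV : u \in V.
Lemma lvl1_old : lvl1 L' u = lvl1 L u. Proof. by rewrite /= (negbTE (neq_fresh uV)). Qed.
Lemma par1_old : par1 L' u = par1 L u. Proof. by rewrite /= (negbTE (neq_fresh uV)). Qed.
Lemma slot1_old : slot1 L' u = slot1 L u. Proof. by rewrite /= (negbTE (neq_fresh uV)). Qed.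
Lemma shad1_old : shad1 L' u = shad1 L u. Proof. by rewrite /= (negbTE (neq_fresh uV)). Qed.
Lemma lvl2_old : lvl2 L' u = lvl2 L u. Proof. by rewrite /= (negbTE (neq_fresh uV)). Qed.
Lemma par2_old : par2 L' u = par2 L u. Proof. by rewrite /= (negbTE (neq_fresh uV)). Qed.
Lemma slot2_old : slot2 L' u = slot2 L u. Proof. by rewrite /= (negbTE (neq_fresh uV)). Qed.
Lemma lvl3_old : lvl3 L' u = lvl3 L u. Proof. by rewrite /= (negbTE (neq_fresh uV)). Qed.
Lemma par3_old : par3 L' u = par3 L u. Proof. by rewrite /= (negbTE (neq_fresh uV)). Qed.
Lemma shad2_old : shad2 L' u = shad2 L u.
Proof.
rewrite /shad2 shad1_old; apply: eq_in_filter => p pb.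
have [pV _ _] := inv_shad1 HI uV pb; by rewrite /= !(negbTE (neq_fresh _)).
Qed.
End Old.

Lemma lvl1_new : lvl1 L' v = lo.+1. Proof. by rewrite /= eqxx. Qed.
Lemma par1_new : par1 L' v = if hi1 is p :: _ then par1 L p else z.
Proof. by rewrite /= eqxx. Qed.
Lemma slot1_new : slot1 L' v = if hi1 is p :: _ then slot1 L p else v.
Proof. by rewrite /= eqxx. Qed.
Lemma shad1_new : shad1 L' v = hi1. Proof. by rewrite /= eqxx. Qed.
Lemma lvl2_new : lvl2 L' v = lvl2v. Proof. by rewrite /= eqxx. Qed.
Lemma par2_new : par2 L' v = if hi2 is c :: _ then par2 L c else top3.
Proof. by rewrite /= eqxx. Qed.
Lemma slot2_new : slot2 L' v = if hi2 is c :: _ then slot2 L c else v.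
Proof. by rewrite /= eqxx. Qed.
Lemma lvl3_new : lvl3 L' v = if hi2 is c :: _ then (lvl3 L c).+1 else 0.
Proof. by rewrite /= eqxx. Qed.
Lemma par3_new : par3 L' v = if hi2 is c :: _ then c else v.
Proof. by rewrite /= eqxx. Qed.
Lemma shad2_new : shad2 L' v = hi2.
Proof.
rewrite /shad2 shad1_new lvl2_new /hi2; apply: eq_in_filter => p pP.
by rewrite lvl2_old ?hi1_mem.
Qed.

Lemma shadow1_old s w : w \in V -> 0 < lvl1 L w ->
  shadow (par1 L') (in_shad1 L') s w = shadow (par1 L) (in_shad1 L) s w.
Proof.
move=> wV lw; have [pV _] := inv_par1 HI wV lw.
by rewrite /shadow /in_shad1 par1_old // shad1_old.
Qed.

Lemma shadow2_old s w : w \in V -> 0 < lvl2 L w ->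
  shadow (par2 L') (in_shad2 L') s w = shadow (par2 L) (in_shad2 L) s w.
Proof.
move=> wV lw; have [pV _] := inv_par2 HI wV lw.
by rewrite /shadow /in_shad2 par2_old // shad2_old.
Qed.

Lemma same_bag1_old u w : u \in V -> w \in V ->
  same_bag (lvl1 L') (par1 L') (slot1 L') u w = same_bag (lvl1 L) (par1 L) (slot1 L) u w.
Proof. by move=> uV wV; rewrite /same_bag !lvl1_old ?par1_old ?slot1_old. Qed.

Lemma same_bag2_old u w : u \in V -> w \in V ->
  same_bag (lvl2 L') (par2 L') (slot2 L') u w = same_bag (lvl2 L) (par2 L) (slot2 L) u w.
Proof. by move=> uV wV; rewrite /same_bag !lvl2_old ?par2_old ?slot2_old. Qed.

Lemma hi1_neq_nil p : p \in hi1 -> hi1 != [::].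
Proof. by move=> pP; apply/eqP => H; rewrite H in pP. Qed.

Lemma bag1_fresh w : w \in tri -> lvl1 L w = lo.+1 -> same_bag (lvl1 L') (par1 L') (slot1 L') v w.
Proof.
move=> wN Hw; have wP : w \in hi1 by rewrite hi1P wN Hw eqxx.
have wV := tri_mem wN.
rewrite /same_bag lvl1_new par1_new slot1_new lvl1_old // par1_old // slot1_old // Hw eqxx /=.
case HP: hi1 wP => [//|p r] wP; have pP : p \in hi1 by rewrite HP inE eqxx.
rewrite -HP in wP pP.
have /and3P[_ /eqP-> /orP[|/eqP->]] := hi1_same_bag pP wP; last by rewrite !eqxx.
by rewrite hi1_lvl1.
Qed.

Lemma shadow1_fresh w : w \in tri -> lvl1 L w = lo -> shadow (par1 L') (in_shad1 L') w v.
Proof.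
move=> wN Hw; have [[xV yV zV] _] := face_xyz_facts.
rewrite /shadow /in_shad1 par1_new; case HP: hi1 => [|p r].
- have [xb yb] : x \in shad1 L z /\ y \in shad1 L z.
    apply (inv_face_flat HI face_xyz); rewrite !(hi1_nil_lvl1 HP) //; by rewrite !inE eqxx ?orbT.
  rewrite shad1_old //; move: wN; rewrite !inE => /or3P[]/eqP->; by rewrite ?eqxx ?xb ?yb ?orbT.
- have pP : p \in hi1 by rewrite HP inE eqxx.
  have lwp : lvl1 L p = (lvl1 L w).+1 by rewrite (hi1_lvl1 pP) Hw.
  have sh := inv_face_up1 HI face_xyz wN (hi1_tri pP) lwp.
  rewrite -(shadow1_old _ (hi1_mem pP)) in sh; last by rewrite (hi1_lvl1 pP).
  by move: sh; rewrite /shadow /in_shad1 par1_old ?hi1_mem.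
Qed.

Lemma par1_fresh : par1 L' v \in v :: V /\ (lvl1 L' (par1 L' v)).+1 = lvl1 L' v.
Proof.
have [[xV yV zV] _] := face_xyz_facts.
rewrite par1_new lvl1_new; case HP: hi1 => [|p r].
- rewrite inE zV orbT lvl1_old // (hi1_nil_lvl1 HP) //; by rewrite !inE eqxx ?orbT.
- have pP : p \in hi1 by rewrite HP inE eqxx.
  have p0 : 0 < lvl1 L p by rewrite (hi1_lvl1 pP).
  have [aV Ea] := inv_par1 HI (hi1_mem pP) p0.
  by rewrite inE aV orbT lvl1_old // Ea (hi1_lvl1 pP).
Qed.

Lemma hi2_hi1 c : c \in hi2 -> c \in hi1.
Proof. by rewrite hi2P => /andP[]. Qed.

Lemma bag2_fresh p : p \in hi1 -> lvl2 L p = lvl2v -> same_bag (lvl2 L') (par2 L') (slot2 L') v p.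
Proof.
move=> pP Hp; have pC : p \in hi2 by rewrite /hi2 mem_filter Hp eqxx pP.
have pV := hi1_mem pP.
rewrite /same_bag lvl2_new par2_new slot2_new lvl2_old // par2_old // slot2_old // Hp eqxx /=.
case: hi2_small pC => [->//|[c HC]]; rewrite HC inE => /eqP->; by rewrite !eqxx orbT.
Qed.

Lemma hi2_nil_lvl2 p : hi2 = [::] -> p \in hi1 -> lvl2 L p = lo2.
Proof.
move=> HC pP; case: (lvl2_hi1 pP) => // lp.
have : p \in hi2 by rewrite hi2P pP lp eqxx.
by rewrite HC.
Qed.

Lemma top3_hi1 : hi1 != [::] -> top3 \in hi1.
Proof.
rewrite /top3; have := size_hi1; case: hi1 => [|s [|p' [|? ?]]] //= _ _.
- by rewrite inE eqxx.
- by case: ifP; rewrite !inE eqxx ?orbT.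
Qed.

(* With [hi2] empty the two members of [hi1] share their [lvl2]-level, so they
   are consecutive on a [lvl3]-path, and [top3] is the later one. *)
Lemma top3P : hi2 = [::] -> forall p, p \in hi1 -> p = top3 \/ p \in shad2 L top3.
Proof.
move=> HC p pP; have := size_hi1; rewrite /top3.
case HP: hi1 pP => [|s [|p' [|r rr]]] //=.
- by rewrite inE => /eqP->; left.
- move=> pP _.
  have sP : s \in hi1 by rewrite HP !inE eqxx.
  have p'P : p' \in hi1 by rewrite HP !inE eqxx orbT.
  have ns : s != p' by move: hi1_uniq; rewrite HP /= inE andbT.
  have [Es|Esp] := hi1_adj sP p'P; first by rewrite Es eqxx in ns.
  have El1 : lvl1 L s = lvl1 L p' by rewrite !hi1_lvl1.
  have El2 : lvl2 L s = lvl2 L p' by rewrite !(hi2_nil_lvl2 HC).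
  have sV := hi1_mem sP; have p'V := hi1_mem p'P.
  case: (inv_path3 HI sV p'V Esp El1 El2) => [][E3 E4].
  + have -> : (lvl3 L p' < lvl3 L s) = false by rewrite E3; lia.
    move: pP; rewrite !inE => /orP[]/eqP->; [right|by left].
    rewrite (inv_shad2 HI p'V) E3 /= E4 inE; by [].
  + have -> : (lvl3 L p' < lvl3 L s) = true by rewrite E3; lia.
    move: pP; rewrite !inE => /orP[]/eqP->; [by left|right].
    rewrite (inv_shad2 HI sV) E3 /= E4 inE; by [].
Qed.

Lemma shadow2_fresh p : p \in hi1 -> lvl2 L p <> lvl2v ->
  lvl2 L p = lo2 /\ shadow (par2 L') (in_shad2 L') p v.
Proof.
move=> pP Hp.
have Hm : lvl2 L p = lo2.
  by case: (lvl2_hi1 pP) => // lp; exfalso; apply: Hp; rewrite lvl2vE ?(hi1_neq_nil pP).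
split=> //; rewrite /shadow /in_shad2 par2_new.
case: hi2_small => [HC|[c HC]]; rewrite HC.
- have apV := hi1_mem (top3_hi1 (hi1_neq_nil pP)).
  rewrite shad2_old //; by case: (top3P HC pP) => [->|->]; rewrite ?eqxx ?orbT.
- have cP : c \in hi1 by apply: hi2_hi1; rewrite HC inE eqxx.
  have cV := hi1_mem cP.
  have cC : c \in hi2 by rewrite HC inE eqxx.
  have lc : lvl2 L c = lo2.+1 by move: cC; rewrite hi2P => /andP[_ /eqP].
  have [w0 w0N Ew0] := lo_attained.
  have l1 : lvl1 L p = (lvl1 L w0).+1 by rewrite (hi1_lvl1 pP) Ew0.
  have l2 : lvl1 L c = lvl1 L p by rewrite (hi1_lvl1 pP) (hi1_lvl1 cP).
  have l3 : lvl2 L c = (lvl2 L p).+1 by rewrite lc Hm.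
  have sh := inv_face_up2 HI face_xyz w0N (hi1_tri pP) (hi1_tri cP) l1 l2 l3.
  rewrite -(shadow2_old _ cV) in sh; last by rewrite lc.
  by move: sh; rewrite /shadow /in_shad2 par2_old.
Qed.

Lemma par2_fresh : 0 < lvl2 L' v -> par2 L' v \in v :: V /\ (lvl2 L' (par2 L' v)).+1 = lvl2 L' v.
Proof.
rewrite lvl2_new par2_new => Hl.
have ne : hi1 != [::] by move: Hl; rewrite /lvl2v; case: hi1.
case: hi2_small => [HC|[c HC]]; rewrite HC.
- have aP := top3_hi1 ne; have aV := hi1_mem aP.
  by rewrite inE aV orbT lvl2_old // (hi2_nil_lvl2 HC aP) lvl2vE.
- have cC : c \in hi2 by rewrite HC inE eqxx.
  have cP := hi2_hi1 cC; have cV := hi1_mem cP.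
  have lc : lvl2 L c = lo2.+1 by move: cC; rewrite hi2P => /andP[_ /eqP].
  have c0 : 0 < lvl2 L c by rewrite lc.
  have [aV Ea] := inv_par2 HI cV c0.
  by rewrite inE aV orbT lvl2_old // Ea lc lvl2vE.
Qed.

Lemma path3_fresh p : p \in hi1 -> lvl2 L p = lvl2v -> lvl3 L' v = (lvl3 L p).+1 /\ p = par3 L' v.
Proof.
move=> pP Hp; have pC : p \in hi2 by rewrite /hi2 mem_filter Hp eqxx pP.
rewrite lvl3_new par3_new; case: hi2_small pC => [->//|[c HC]]; rewrite HC inE => /eqP->; by [].
Qed.

Lemma par3_fresh : 0 < lvl3 L' v -> par3 L' v \in v :: V /\ (lvl3 L' (par3 L' v)).+1 = lvl3 L' v.
Proof.
rewrite lvl3_new par3_new; case HC: hi2 => [//|c r] _.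
have cC : c \in hi2 by rewrite HC inE eqxx.
have cV := hi1_mem (hi2_hi1 cC).
by rewrite inE cV orbT lvl3_old.
Qed.

Lemma shad2_fresh : shad2 L' v = (if lvl3 L' v == 0 then [::] else [:: par3 L' v]).
Proof. rewrite shad2_new lvl3_new par3_new; by case: hi2_small => [->|[c ->]]. Qed.

Lemma lvl1_tri_old w : w \in tri -> lvl1 L' w = lvl1 L w.
Proof. by move=> wN; rewrite lvl1_old // tri_mem. Qed.

Lemma face_up1_fresh w p : w \in v :: tri -> p \in v :: tri -> lvl1 L' p = (lvl1 L' w).+1 ->
  shadow (par1 L') (in_shad1 L') w p.
Proof.
rewrite !(in_cons v) => /orP[/eqP->|wN] /orP[/eqP->|pN]; rewrite ?lvl1_new ?lvl1_tri_old //.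
- by lia.
- by case: (lvl1_tri pN); lia.
- by move=> H; apply: shadow1_fresh => //; case: (lvl1_tri wN); lia.
- move=> H; have := inv_face_up1 HI face_xyz wN pN H.
  by rewrite -(shadow1_old _ (tri_mem pN)) // H.
Qed.

Lemma face_up2_fresh w s p : w \in v :: tri -> s \in v :: tri -> p \in v :: tri ->
  lvl1 L' s = (lvl1 L' w).+1 -> lvl1 L' p = lvl1 L' s -> lvl2 L' p = (lvl2 L' s).+1 ->
  shadow (par2 L') (in_shad2 L') s p.
Proof.
rewrite !(in_cons v) => Hw Hs Hp H1 H2 H3.
case/orP: Hw => [/eqP Ew|wN].
  rewrite Ew lvl1_new in H1.
  case/orP: Hs H1 => [/eqP->|sN]; rewrite ?lvl1_new ?lvl1_tri_old //; first by lia.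
  by case: (lvl1_tri sN); lia.
case/orP: Hs H1 H2 H3 => [/eqP->|sN]; case/orP: Hp => [/eqP->|pN];
  rewrite ?lvl1_new ?lvl2_new ?lvl1_tri_old //.
- by lia.
- move=> Hw Hp; rewrite lvl2_old ?tri_mem // => Hl.
  have pP : p \in hi1 by rewrite hi1P pN Hp eqxx.
  case: (lvl2_hi1 pP); rewrite Hl lvl2vE ?(hi1_neq_nil pP); lia.
- move=> _ Hs; rewrite lvl2_old ?tri_mem // => Hl.
  have sP : s \in hi1 by rewrite hi1P sN -Hs eqxx.
  have Hn : lvl2 L s <> lvl2v by rewrite Hl; lia.
  by case: (shadow2_fresh sP Hn).
- move=> H1 H2; rewrite !lvl2_old ?tri_mem // => H3.
  have := inv_face_up2 HI face_xyz wN sN pN H1 H2 H3.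
  by rewrite -(shadow2_old _ (tri_mem pN)) // H3.
Qed.

Definition F' := (x, y, v) :: (y, z, v) :: (x, z, v) :: rem (x, y, z) F.

Lemma new_faceP a b c : (a, b, c) \in F' -> (a, b, c) \in F \/
  [/\ a \in tri, b \in tri, c = v & E a b].
Proof.
have [_ [Exy Eyz Exz]] := face_xyz_facts.
rewrite /F' !in_cons => /or4P[].
- move/eqP => -[-> -> ->]; right; by split; rewrite /tri ?inE ?eqxx ?orbT.
- move/eqP => -[-> -> ->]; right; by split; rewrite /tri ?inE ?eqxx ?orbT.
- move/eqP => -[-> -> ->]; right; by split; rewrite /tri ?inE ?eqxx ?orbT.
- by move/mem_rem; left.
Qed.

Lemma new_face_sub a b : a \in tri -> b \in tri -> {subset [:: a; b; v] <= v :: tri}.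
Proof.
move=> aN bN u Hu; rewrite in_cons.
have : [|| u == a, u == b | u == v].
  by move: Hu; rewrite !in_cons in_nil orbF.
by case/or3P=> /eqP->; rewrite ?eqxx ?aN ?bN ?orbT.
Qed.

Lemma step_edge_mem u w : E' u w -> u \in v :: V /\ w \in v :: V.
Proof.
rewrite /E' /add_vertex => /or3P[/(inv_edge_mem HI)[uV wV]|/andP[/eqP-> wN]|/andP[/eqP-> uN]].
- by rewrite !in_cons uV wV !orbT.
- by rewrite !in_cons (tri_mem wN) eqxx !orbT.
- by rewrite !in_cons (tri_mem uN) eqxx !orbT.
Qed.

Lemma step_edge_sym u w : E' u w -> E' w u.
Proof.
by rewrite /E' /add_vertex => /or3P[/(inv_edge_sym HI)->//|H|H]; rewrite H ?orbT.
Qed.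

Lemma step_edge_irr u : E' u u = false.
Proof.
rewrite /E' /add_vertex (inv_edge_irr HI) /=.
case: (u =P v) => [->|_] //=; apply/negP => /orP[] /tri_mem; by rewrite (negbTE v_fresh).
Qed.

Lemma step_face a b c : (a, b, c) \in F' ->
  [/\ a \in v :: V, b \in v :: V & c \in v :: V] /\ [/\ E' a b, E' b c & E' a c].
Proof.
case/new_faceP => [Hold|[aN bN -> Eab]].
- have [[aV bV cV] [Eab Ebc Eac]] := inv_face HI Hold.
  by split; [split; rewrite in_cons ?aV ?bV ?cV orbT| split; apply: E'_ext].
- have aV := tri_mem aN; have bV := tri_mem bN.
  split; first by split; rewrite in_cons ?aV ?bV ?eqxx ?orbT.
  by split; rewrite ?E'_fresh_r ?aN ?bN //; apply: E'_ext.
Qed.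

Lemma step_face_flat a b c : (a, b, c) \in F' -> lvl1 L' a = lvl1 L' c -> lvl1 L' b = lvl1 L' c ->
  a \in shad1 L' c /\ b \in shad1 L' c.
Proof.
case/new_faceP => [Hold|[aN bN -> Eab]].
- have [[aV bV cV] _] := inv_face HI Hold.
  rewrite !lvl1_old // => la lb; rewrite shad1_old //; exact: (inv_face_flat HI Hold la lb).
- rewrite lvl1_new !lvl1_old ?tri_mem // => la lb.
  by rewrite shad1_new !hi1P aN bN la lb eqxx.
Qed.

Lemma step_face_up1 a b c : (a, b, c) \in F' -> forall w p,
  w \in [:: a; b; c] -> p \in [:: a; b; c] ->
  lvl1 L' p = (lvl1 L' w).+1 -> shadow (par1 L') (in_shad1 L') w p.
Proof.
case/new_faceP => [Hold|[aN bN -> Eab]] w p Hw Hp.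
- have [[aV bV cV] _] := inv_face HI Hold.
  have M u : u \in [:: a; b; c] -> u \in V by rewrite !inE => /or3P[]/eqP->.
  rewrite !lvl1_old ?M // => lwp; have := inv_face_up1 HI Hold Hw Hp lwp.
  by rewrite shadow1_old ?M // lwp.
- exact: face_up1_fresh (new_face_sub aN bN Hw) (new_face_sub aN bN Hp).
Qed.

Lemma step_face_up2 a b c : (a, b, c) \in F' -> forall w s p,
  w \in [:: a; b; c] -> s \in [:: a; b; c] -> p \in [:: a; b; c] ->
  lvl1 L' s = (lvl1 L' w).+1 -> lvl1 L' p = lvl1 L' s -> lvl2 L' p = (lvl2 L' s).+1 ->
  shadow (par2 L') (in_shad2 L') s p.
Proof.
case/new_faceP => [Hold|[aN bN -> Eab]] w s p Hw Hs Hp.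
- have [[aV bV cV] _] := inv_face HI Hold.
  have M u : u \in [:: a; b; c] -> u \in V by rewrite !inE => /or3P[]/eqP->.
  rewrite !lvl1_old ?M // !lvl2_old ?M // => l1 l2 l3.
  have := inv_face_up2 HI Hold Hw Hs Hp l1 l2 l3.
  by rewrite shadow2_old ?M // l3.
- exact: face_up2_fresh (new_face_sub aN bN Hw) (new_face_sub aN bN Hs) (new_face_sub aN bN Hp).
Qed.

Lemma step_bag1 u w : u \in v :: V -> w \in v :: V -> E' u w -> lvl1 L' u = lvl1 L' w ->
  same_bag (lvl1 L') (par1 L') (slot1 L') u w.
Proof.
rewrite !in_cons => /orP[/eqP->|uV] /orP[/eqP->|wV] Euw El.
- exact: same_bag_refl.
- rewrite E'_fresh_l // in Euw; rewrite lvl1_new lvl1_old // in El; exact: bag1_fresh.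
- rewrite E'_fresh_r // in Euw; rewrite lvl1_new lvl1_old // in El.
  by rewrite same_bag_sym; exact: bag1_fresh.
- rewrite E'_old // in Euw; rewrite !lvl1_old // in El.
  by rewrite same_bag1_old //; exact: (inv_bag1 HI uV wV Euw El).
Qed.

Lemma step_across1 u w : u \in v :: V -> w \in v :: V -> E' u w -> lvl1 L' u <> lvl1 L' w ->
  (lvl1 L' w = (lvl1 L' u).+1 /\ shadow (par1 L') (in_shad1 L') u w) \/
  (lvl1 L' u = (lvl1 L' w).+1 /\ shadow (par1 L') (in_shad1 L') w u).
Proof.
rewrite !in_cons => /orP[/eqP->|uV] /orP[/eqP->|wV] Euw El //.
- rewrite E'_fresh_l // in Euw; rewrite lvl1_new lvl1_old // in El *.
  have lw : lvl1 L w = lo by case: (lvl1_tri Euw) => // lw; rewrite lw in El.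
  by right; split; [rewrite lw | exact: shadow1_fresh].
- rewrite E'_fresh_r // in Euw; rewrite lvl1_new lvl1_old // in El *.
  have lu : lvl1 L u = lo by case: (lvl1_tri Euw) => // lu; rewrite lu in El.
  by left; split; [rewrite lu | exact: shadow1_fresh].
- rewrite E'_old // in Euw; rewrite !lvl1_old // in El *.
  by case: (inv_across1 HI uV wV Euw El) => [][l sh]; [left|right]; split => //;
    rewrite shadow1_old // l.
Qed.

Lemma step_par1 u : u \in v :: V -> 0 < lvl1 L' u ->
  par1 L' u \in v :: V /\ (lvl1 L' (par1 L' u)).+1 = lvl1 L' u.
Proof.
rewrite in_cons => /orP[/eqP->|uV]; first by move=> _; exact: par1_fresh.
rewrite lvl1_old // par1_old // => lu; have [pV lp] := inv_par1 HI uV lu.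
by rewrite in_cons pV orbT lvl1_old.
Qed.

Lemma step_shad1 a s : a \in v :: V -> s \in shad1 L' a ->
  [/\ s \in v :: V, E' a s & lvl1 L' s = lvl1 L' a].
Proof.
rewrite in_cons => /orP[/eqP->|aV].
- rewrite shad1_new => sP; have sV := hi1_mem sP.
  by rewrite in_cons sV orbT E'_fresh_l ?(hi1_tri sP) // lvl1_new lvl1_old ?(hi1_lvl1 sP).
- rewrite shad1_old // => sh; have [sV Eas El] := inv_shad1 HI aV sh.
  by rewrite in_cons sV orbT E'_old // !lvl1_old.
Qed.

Lemma step_shad1_clique a s s' : a \in v :: V -> s \in shad1 L' a -> s' \in shad1 L' a ->
  s = s' \/ E' s s'.
Proof.
rewrite in_cons => /orP[/eqP->|aV].
- rewrite !shad1_new => sP s'P.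
  by case: (hi1_adj sP s'P) => [->|Ess']; [left|right; exact: E'_ext].
- rewrite !shad1_old // => sh sh'.
  by case: (inv_shad1_clique HI aV sh sh') => [->|Ess']; [left|right; exact: E'_ext].
Qed.

Lemma step_bag2 u w : u \in v :: V -> w \in v :: V -> E' u w ->
  lvl1 L' u = lvl1 L' w -> lvl2 L' u = lvl2 L' w -> same_bag (lvl2 L') (par2 L') (slot2 L') u w.
Proof.
rewrite !in_cons => /orP[/eqP->|uV] /orP[/eqP->|wV] Euw El1 El2.
- exact: same_bag_refl.
- rewrite E'_fresh_l // in Euw; rewrite lvl1_new lvl1_old // in El1.
  rewrite lvl2_new lvl2_old // in El2.
  by apply: bag2_fresh => //; rewrite hi1P Euw El1 eqxx.
- rewrite E'_fresh_r // in Euw; rewrite lvl1_new lvl1_old // in El1.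
  rewrite lvl2_new lvl2_old // in El2.
  by rewrite same_bag_sym; apply: bag2_fresh => //; rewrite hi1P Euw -El1 eqxx.
- rewrite E'_old // in Euw; rewrite !lvl1_old // in El1; rewrite !lvl2_old // in El2.
  by rewrite same_bag2_old //; exact: (inv_bag2 HI uV wV Euw El1 El2).
Qed.

Lemma step_across2 u w : u \in v :: V -> w \in v :: V -> E' u w ->
  lvl1 L' u = lvl1 L' w -> lvl2 L' u <> lvl2 L' w ->
  (lvl2 L' w = (lvl2 L' u).+1 /\ shadow (par2 L') (in_shad2 L') u w) \/
  (lvl2 L' u = (lvl2 L' w).+1 /\ shadow (par2 L') (in_shad2 L') w u).
Proof.
rewrite !in_cons => /orP[/eqP->|uV] /orP[/eqP->|wV] Euw El1 El2 //.
- rewrite E'_fresh_l // in Euw; rewrite lvl1_new lvl1_old // in El1.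
  rewrite lvl2_new lvl2_old // in El2 *.
  have wP : w \in hi1 by rewrite hi1P Euw El1 eqxx.
  have [lw sh] := shadow2_fresh wP (nesym El2).
  by right; split => //; rewrite lw lvl2vE ?(hi1_neq_nil wP).
- rewrite E'_fresh_r // in Euw; rewrite lvl1_new lvl1_old // in El1.
  rewrite lvl2_new lvl2_old // in El2 *.
  have uP : u \in hi1 by rewrite hi1P Euw -El1 eqxx.
  have [lu sh] := shadow2_fresh uP El2.
  by left; split => //; rewrite lu lvl2vE ?(hi1_neq_nil uP).
- rewrite E'_old // in Euw; rewrite !lvl1_old // in El1; rewrite !lvl2_old // in El2 *.
  by case: (inv_across2 HI uV wV Euw El1 El2) => [][l sh]; [left|right]; split => //;
    rewrite shadow2_old // l.
Qed.

Lemma step_par2 u : u \in v :: V -> 0 < lvl2 L' u ->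
  par2 L' u \in v :: V /\ (lvl2 L' (par2 L' u)).+1 = lvl2 L' u.
Proof.
rewrite in_cons => /orP[/eqP->|uV]; first exact: par2_fresh.
rewrite lvl2_old // par2_old // => lu; have [pV lp] := inv_par2 HI uV lu.
by rewrite in_cons pV orbT lvl2_old.
Qed.

Lemma step_path3 u w : u \in v :: V -> w \in v :: V -> E' u w ->
  lvl1 L' u = lvl1 L' w -> lvl2 L' u = lvl2 L' w ->
  (lvl3 L' w = (lvl3 L' u).+1 /\ u = par3 L' w) \/ (lvl3 L' u = (lvl3 L' w).+1 /\ w = par3 L' u).
Proof.
rewrite !in_cons => /orP[/eqP->|uV] /orP[/eqP->|wV] Euw El1 El2.
- by rewrite E'_fresh_irr in Euw.
- rewrite E'_fresh_l // in Euw; rewrite lvl1_new lvl1_old // in El1.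
  rewrite lvl2_new lvl2_old // in El2.
  have wP : w \in hi1 by rewrite hi1P Euw El1 eqxx.
  have [l3 p3] := path3_fresh wP (esym El2).
  by right; rewrite (lvl3_old wV); split.
- rewrite E'_fresh_r // in Euw; rewrite lvl1_new lvl1_old // in El1.
  rewrite lvl2_new lvl2_old // in El2.
  have uP : u \in hi1 by rewrite hi1P Euw -El1 eqxx.
  have [l3 p3] := path3_fresh uP El2.
  by left; rewrite (lvl3_old uV); split.
- rewrite E'_old // in Euw; rewrite !lvl1_old // in El1; rewrite !lvl2_old // in El2.
  by rewrite !lvl3_old // !par3_old //; exact: (inv_path3 HI uV wV Euw El1 El2).
Qed.

Lemma step_par3 u : u \in v :: V -> 0 < lvl3 L' u ->
  par3 L' u \in v :: V /\ (lvl3 L' (par3 L' u)).+1 = lvl3 L' u.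
Proof.
rewrite in_cons => /orP[/eqP->|uV]; first exact: par3_fresh.
rewrite lvl3_old // par3_old // => lu; have [pV lp] := inv_par3 HI uV lu.
by rewrite in_cons pV orbT lvl3_old.
Qed.

Lemma step_shad2 u : u \in v :: V ->
  shad2 L' u = (if lvl3 L' u == 0 then [::] else [:: par3 L' u]).
Proof.
rewrite in_cons => /orP[/eqP->|uV]; first exact: shad2_fresh.
by rewrite shad2_old // lvl3_old // par3_old //; exact: (inv_shad2 HI uV).
Qed.

Lemma stack_inv_step : stack_inv (v :: V) E' F' L'.
Proof.
split; [exact: step_edge_mem | exact: step_edge_sym | exact: step_edge_irr | exact: step_face
  | exact: step_face_flat | exact: step_face_up1 | exact: step_face_up2 | exact: step_bag1
  | exact: step_across1 | exact: step_par1 | exact: step_shad1 | exact: step_shad1_clique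
  | exact: step_bag2 | exact: step_across2 | exact: step_par2 | exact: step_path3
  | exact: step_par3 | exact: step_shad2].
Qed.
End Stack.

Section Base.
Variables a b c : nat.
Hypotheses (ab : a != b) (bc : b != c) (ac : a != c).

Let ba : (b == a) = false. Proof. by rewrite eq_sym (negbTE ab). Qed.
Let cb : (c == b) = false. Proof. by rewrite eq_sym (negbTE bc). Qed.
Let ca : (c == a) = false. Proof. by rewrite eq_sym (negbTE ac). Qed.
Let ab' := negbTE ab.
Let bc' := negbTE bc.
Let ac' := negbTE ac.

(* All three vertices form layer 0 of [lvl1]; inside it [a] is alone on
   [lvl2]-level 0 and [b], [c] form the path [b -- c] on level 1. *)
Definition base_layerings := Layerings (fun _ => 0) (fun _ => 0) (fun _ => 0)
  (fun u => if u == b then [:: a] else if u == c then [:: a; b] else [::])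
  (fun u => if u == a then 0 else 1) (fun _ => a) (fun u => if u == a then a else b)
  (fun u => if u == c then 1 else 0) (fun _ => b).

Lemma tri_edgeE u w :
  tri_edge a b c u w = [&& u \in [:: a; b; c], w \in [:: a; b; c] & u != w].
Proof.
apply/idP/idP.
- rewrite /tri_edge; case/orP => [H|/orP[H|/orP[H|/orP[H|/orP[H|H]]]]];
    case/andP: H => /eqP-> /eqP->; by rewrite !inE !eqxx ?orbT //= ?ab ?bc ?ac ?ba ?cb ?ca.
- rewrite !inE => /and3P[/or3P[]/eqP-> /or3P[]/eqP-> Hn]; move: Hn;
  rewrite /tri_edge ?eqxx ?ab' ?bc' ?ac' ?ba ?cb ?ca //=.
Qed.

Lemma stack_inv_base :
  stack_inv [:: a; b; c] (tri_edge a b c) [:: (a, b, c); (a, b, c)] base_layerings.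
Proof.
have Fc x y z : (x, y, z) \in [:: (a, b, c); (a, b, c)] -> [/\ x = a, y = b & z = c].
  by rewrite !inE => /orP[] /eqP[-> -> ->].
split.
- by move=> u w; rewrite tri_edgeE => /and3P[].
- by move=> u w; rewrite !tri_edgeE eq_sym => /and3P[-> -> ->].
- by move=> u; rewrite tri_edgeE eqxx /= !andbF.
- by move=> x y z /Fc[-> -> ->]; rewrite !tri_edgeE !inE !eqxx ?orbT /=.
- by move=> x y z /Fc[-> -> ->] _ _; rewrite /= !eqxx ?cb ?ca ?inE ?eqxx ?orbT.
- by [].
- by [].
- by move=> u w _ _ _ _; rewrite /same_bag /= ?eqxx.
- by [].
- by [].
- move=> u s; rewrite !inE => /or3P[]/eqP->; rewrite /= ?eqxx ?ba ?ca ?cb ?ab' ?ac' ?bc' //.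
  + by rewrite inE => /eqP->; rewrite tri_edgeE !inE !eqxx ?orbT /= ?ba.
  + by rewrite !inE => /orP[]/eqP->; rewrite tri_edgeE !inE !eqxx ?orbT /= ?ca ?cb.
- move=> u s s'; rewrite !inE => /or3P[]/eqP->; rewrite /= ?eqxx ?ba ?ca ?cb ?ab' ?ac' ?bc' //.
  + by rewrite !inE => /eqP-> /eqP->; left.
  + rewrite !inE => /orP[]/eqP-> /orP[]/eqP->; try by left.
    * by right; rewrite tri_edgeE !inE !eqxx ?orbT /= ?ab.
    * by right; rewrite tri_edgeE !inE !eqxx ?orbT /= ?ba.
- move=> u w uV wV _ _; rewrite /same_bag /= => l2.
  by case: (u == a) l2; case: (w == a) => //= _; rewrite !eqxx.
- move=> u w uV wV Euw _ /=.
  case: (eqVneq u a) => [->|ua]; case: (eqVneq w a) => [->|wa];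
    rewrite ?eqxx ?(negbTE ua) ?(negbTE wa) //= => _.
  + by left; rewrite /shadow eqxx.
  + by right; rewrite /shadow eqxx.
- by move=> v vV /=; case: (v == a) => //= _; rewrite !inE eqxx.
- move=> u w; rewrite !inE => /or3P[]/eqP-> /or3P[]/eqP->;
  rewrite /= ?tri_edgeE ?inE ?eqxx ?orbT /= ?ab' ?ba ?ac' ?ca ?bc' ?cb //=;
  try (move=> _ _; by [left|right]).
- by move=> v; rewrite !inE => /or3P[]/eqP->; rewrite /= ?eqxx ?ab' ?ba ?ac' ?ca ?bc' ?cb.
- move=> v; rewrite !inE => /or3P[]/eqP->;
  by rewrite /shad2 /= ?eqxx ?ab' ?ba ?ac' ?ca ?bc' ?cb /= ?eqxx ?ab' ?ba ?ac' ?ca ?bc' ?cb.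
Qed.

End Base.

Lemma stack_inv_planar V E F : planar3tree V E F -> exists L, stack_inv V E F L.
Proof.
elim => [a b c ab bc ac | V0 E0 F0 x y z v _ [L HI] face_xyz v_fresh].
- by exists (base_layerings a b c); exact: stack_inv_base.
- by exists (L' L x y z v); apply: stack_inv_step.
Qed.

Theorem mainTheorem3 (V : seq nat) (E : nat -> nat -> bool) :
  is_planar_3_tree V E -> has_track_layout V E 4000.
Proof.
move=> [F p3t]; have [L HI] := stack_inv_planar p3t.
have [trk [pos lay]] := E_layout HI.
by exists trk, pos; apply: layout_weaken lay.
Qed.
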